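(* Let $G$ be a finite connected simple graph with $n$ vertices and $m$ edges, and let $a,b\in\mathbb{C}$, $c=a-b$. Let $\mathbf d:\ell^2(R(G))\to\ell^2(V(G))$ be a linear map with $\mathbf d\mathbf d^*=\mathbf I_n$, put $\mathbf C=a\,\mathbf d^*\mathbf d+b(\mathbf I_{2m}-\mathbf d^*\mathbf d)$ and $\mathbf U=\mathbf S\mathbf C$. Then for every $u\in\mathbb{C}$ with $b^2u^2\neq 1$, \[ \det(\mathbf I_{2m}-u\mathbf U)=(1-b^2u^2)^{m-n}\det\big((1-abu^2)\mathbf I_n-cu\,\mathbf d\mathbf S\mathbf d^*\big). \] Equivalently, the zeta function $\zeta(G,u)=\det(\mathbf I_{2m}-u\mathbf U)^{-1}$ satisfies $\zeta(G,u)^{-1}=(1-b^2u^2)^{m-n}\det((1-abu^2)\mathbf I_n-cu\,\mathbf d\mathbf S\mathbf d^* )$.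
   Context: For a simple graph $G$, $R(G)=\{(u,v),(v,u): uv\in E(G)\}$ is the set of arcs (so $|R(G)|=2m$); for $e=(u,v)$, $e^{-1}=(v,u)$. $\ell^2(V(G))\cong\mathbb{C}^n$ and $\ell^2(R(G))\cong\mathbb{C}^{2m}$ are the spaces of complex functions on vertices and arcs with the standard inner product; $\mathbf d^*$ denotes the adjoint of $\mathbf d$. $\mathbf S$ is the arc-reversal operator on $\ell^2(R(G))$: $(\mathbf S\omega)(e)=\omega(e^{-1})$. $\mathbf I_k$ is the identity of size $k$. The matrix $\mathbf U=\mathbf S\mathbf C$ is the time evolution matrix of a ''general coined quantum walk'' on $G$. *)

From HB Require Import structures.
From mathcomp Require Import all_boot all_order all_algebra.
Set Implicit Arguments. Unset Strict Implicit. Unset Printing Implicit Defensive.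
Import Order.TTheory GRing.Theory Num.Theory.
Local Open Scope ring_scope.

(* A simple graph is a symmetric irreflexive relation [e] on a finType [V].
   Arcs R(G): ordered pairs (u,v) with uv an edge. *)
Definition arcs (V : finType) (e : rel V) : finType := {p : V * V | e p.1 p.2}.

Definition connected_graph (V : finType) (e : rel V) : Prop :=
  forall x y : V, connect e x y.

(* Number of edges m: |R(G)| = 2m. *)
Definition nedges (V : finType) (e : rel V) : nat := (#|arcs e| %/ 2)%N.

(* Arc-reversal operator S on l^2(R(G)), as a matrix indexed by the
   enumeration of arcs: (S w)(x) = w(x^{-1}), i.e. S_{x,y} = [y = x^{-1}]. *)
Definition arcS (R : nzRingType) (V : finType) (e : rel V) : 'M[R]_#|arcs e| :=
  \matrix_(i, j) (((val (enum_val j : arcs e)).1 == (val (enum_val i : arcs e)).2)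
                 && ((val (enum_val j : arcs e)).2 == (val (enum_val i : arcs e)).1))%:R.

Definition adjmx (R : numClosedFieldType) m n (A : 'M[R]_(m, n)) : 'M[R]_(n, m) :=
  map_mx Num.conj A^T.

From HB Require Import structures.
From mathcomp Require Import all_boot all_order all_algebra all_fingroup.
From mathcomp Require Import ring.
Set Implicit Arguments. Unset Strict Implicit. Unset Printing Implicit Defensive.
Import Order.TTheory GRing.Theory Num.Theory.
Local Open Scope ring_scope.

(* Since [S] is an involution, [1 - buS] has inverse [(1 + buS) / (1 - b^2u^2)],
   and [1 - uU = (1 - buS) (1 - X d)] with [X : l^2(V) -> l^2(R(G))].  By
   [det (1 - X d) = det (1 - d X)] the second factor becomes a determinant on
   [l^2(V)], which [d d' = 1] (with [d'] the adjoint) turns into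
   [(1 - b^2u^2)^-n det ((1 - abu^2) - cu d S d')].
   As [S] permutes the [2m] arcs without fixed points,
   [det (1 - buS) = (1 - b^2u^2)^m]. *)

Section FixedPointFreeInvolution.
Variables (n : nat) (s : 'S_n).
Hypotheses (sK : involutive s) (s_neq : forall i, s i != i).

Lemma perm_mx_invol (R : nzRingType) : perm_mx s *m perm_mx s = 1%:M :> 'M[R]_n.
Proof.
rewrite -perm_mxM -perm_mx1; congr perm_mx.
by apply/permP => i; rewrite permM sK perm1.
Qed.

(* The orbits of [s] are pairs, each containing one [i] with [i < s i]. *)
Lemma double_half_invol : (n %/ 2).*2 = n.
Proof.
pose A := [set i : 'I_n | (i < s i)%N].
have sA : s @: A = ~: A.
  apply/setP => i; rewrite -{1}[i]sK mem_imset ?in_setC ?inE; last exact: perm_inj.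
  by rewrite sK -leqNgt ltn_neqAle s_neq.
have := cardsC A; rewrite -sA card_imset ?card_ord => [<-|]; last exact: perm_inj.
by rewrite addnn divn2 half_double.
Qed.

(* Conjugation by the diagonal sign matrix [i |-> (-1)^(i < s i)] negates
   [perm_mx s]. *)
Lemma det_1D_scale_perm_mx (R : comNzRingType) (x : R) :
  \det (1%:M + x *: perm_mx s) = \det (1%:M - x *: perm_mx s :> 'M[R]_n).
Proof.
pose D := diag_mx (\row_(i < n) (-1) ^+ (i < s i)%N : 'rV[R]_n).
have DD : D *m D = 1%:M.
  by rewrite mulmx_diag; apply/matrixP => i j; rewrite !mxE -expr2 sqrr_sign.
have DPD : D *m perm_mx s *m D = - perm_mx s.
  rewrite mul_diag_mx mul_mx_diag; apply/matrixP => i j; rewrite !mxE.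
  have [<-|_] := eqVneq (s i) j; last by rewrite mulr0 mul0r oppr0.
  rewrite sK mulr1 -signr_addb.
  by rewrite ltnNge leq_eqVlt val_eqE (negbTE (s_neq i)) addNb addbb.
have -> : 1%:M + x *: perm_mx s = D *m (1%:M - x *: perm_mx s) *m D.
  by rewrite mulmxBr mulmx1 mulmxBl DD -scalemxAr -scalemxAl DPD scalerN opprK.
by rewrite !det_mulmx mulrC mulrA -det_mulmx DD det1 mul1r.
Qed.

(* [(1 - xP)(1 + xP) = (1 - x^2) I] determines [det (1 - xP)] up to sign as a
   polynomial in [x]; the sign is fixed by the value at [x = 0]. *)
Lemma det_1B_scale_perm_mx (R : numDomainType) (x : R) :
  \det (1%:M - x *: perm_mx s :> 'M[R]_n) = (1 - x ^+ 2) ^+ (n %/ 2).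
Proof.
pose p : {poly R} := \det (1%:M - 'X *: perm_mx s).
pose r : {poly R} := (1 - 'X ^+ 2) ^+ (n %/ 2).
have p_eval y : p.[y] = \det (1%:M - y *: perm_mx s).
  rewrite /p -horner_evalE -det_map_mx; congr (\det _).
  apply/matrixP => i j; rewrite !mxE /= rmorphB rmorphM !rmorph_nat.
  by rewrite -[_ 'X]/('X.[y]) hornerX.
have ppE : p * p = r * r.
  have F : (1%:M - 'X *: perm_mx s) *m (1%:M + 'X *: perm_mx s)
           = (1 - 'X ^+ 2) *: 1%:M :> 'M[{poly R}]_n.
    rewrite mulmxDr mulmx1 mulmxBl mul1mx -scalemxAl -scalemxAr perm_mx_invol.
    by rewrite scalerA scalerBl scale1r -expr2 addrA subrK.
  rewrite {2}/p -det_1D_scale_perm_mx -det_mulmx F detZ det1 mulr1.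
  by rewrite -{1}double_half_invol -addnn exprD.
have : (p - r) * (p + r) = 0.
  by rewrite mulrDr !mulrBl ppE [r * p]mulrC addrA subrK subrr.
rewrite -p_eval => /eqP; rewrite mulf_eq0 subr_eq0 addr_eq0.
case/orP=> [/eqP -> | /eqP p_opp].
  by rewrite /r !hornerE.
have := p_eval 0; rewrite p_opp scale0r subr0 det1 /r !hornerE expr0n subr0 expr1n.
by move/eqP; rewrite eq_sym -subr_eq0 opprK -mulr2n pnatr_eq0.
Qed.

End FixedPointFreeInvolution.

Lemma det_1B_mulmxC (R : comNzRingType) p q (X : 'M[R]_(p, q)) (Y : 'M[R]_(q, p)) :
  \det (1%:M - X *m Y) = \det (1%:M - Y *m X).
Proof.
have E1 : block_mx 1%:M X Y 1%:M
          = block_mx 1%:M 0 Y 1%:M *m block_mx 1%:M X 0 (1%:M - Y *m X).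
  by rewrite mulmx_block !mul1mx !mul0mx ?mulmx0 ?mulmx1 ?add0r ?addr0 addrC subrK.
have E2 : block_mx 1%:M X Y 1%:M
          = block_mx (1%:M - X *m Y) X 0 1%:M *m block_mx 1%:M 0 Y 1%:M.
  by rewrite mulmx_block !mul1mx !mul0mx ?mulmx0 ?mulmx1 ?add0r ?addr0 subrK.
have := congr1 determinant (etrans (esym E1) E2).
by rewrite !det_mulmx !(det_lblock, det_ublock) !det1 !mul1r !mulr1 => ->.
Qed.

Section CoinedWalk.
Variables (R : fieldType) (p q : nat).
Variables (d : 'M[R]_(p, q)) (d' : 'M[R]_(q, p)) (S : 'M[R]_q).
Hypotheses (dd' : d *m d' = 1%:M) (SS : S *m S = 1%:M).
Variables (a b u : R).
Let k := 1 - b ^+ 2 * u ^+ 2.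
Hypothesis k_neq0 : k != 0.

Lemma det_coined_walk :
  \det (1%:M - u *: (S *m (a *: (d' *m d) + b *: (1%:M - d' *m d)))) * k ^+ p =
  \det (1%:M - (b * u) *: S)
  * \det ((1 - a * b * u ^+ 2) *: 1%:M - ((a - b) * u) *: (d *m S *m d')).
Proof.
set A := 1%:M - (b * u) *: S.
set B := 1%:M + (b * u) *: S.
set X := ((a - b) * u / k) *: (B *m S *m d').
have AB : A *m B = k *: 1%:M.
  rewrite mulmxDr mulmx1 mulmxBl mul1mx -scalemxAl -scalemxAr SS scalerA.
  by rewrite scalerBl scale1r -expr2 exprMn addrA subrK.
have walk_factor : 1%:M - u *: (S *m (a *: (d' *m d) + b *: (1%:M - d' *m d)))
                   = A *m (1%:M - X *m d).
  have AXd : A *m (X *m d) = ((a - b) * u) *: (S *m d' *m d).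
    rewrite /X -!scalemxAl -scalemxAr !mulmxA AB -!scalemxAl mul1mx scalerA.
    by rewrite divfK.
  rewrite mulmxBr mulmx1 AXd /A mulmxDr -!scalemxAr mulmxBr mulmx1 mulmxA.
  rewrite -addrA -opprD scalerBr addrCA -scalerBl scalerDr !scalerA.
  by rewrite [u * b]mulrC [u * (a - b)]mulrC.
have one_sub_dX : 1%:M - d *m X
          = k^-1 *: ((1 - a * b * u ^+ 2) *: 1%:M - ((a - b) * u) *: (d *m S *m d')).
  have dXE : d *m X = ((a - b) * u / k) *: (d *m S *m d' + (b * u) *: 1%:M).
    rewrite /X -scalemxAr /B !mulmxDl !mul1mx -!scalemxAl SS mul1mx.
    by rewrite mulmxDr -scalemxAr dd' !mulmxA.
  rewrite dXE scalerDr scalerA opprD addrA addrAC -{1}(scale1r 1%:M) -scalerBl.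
  rewrite scalerBr !scalerA [k^-1 * (_ * u)]mulrC.
  by congr (_ *: _ - _); rewrite /k; field; rewrite exprMn.
rewrite [in LHS]walk_factor det_mulmx det_1B_mulmxC one_sub_dX detZ exprVn.
by rewrite mulrC mulrCA mulVKf // expf_neq0.
Qed.

End CoinedWalk.

Section ArcReversal.
Variables (V : finType) (e : rel V).
Hypotheses (esym : symmetric e) (eirr : irreflexive e).

Lemma arc_rev_subproof (x : arcs e) : e (val x).2 (val x).1.
Proof. by rewrite esym; exact: (valP x). Qed.

Definition arc_rev (x : arcs e) : arcs e := Sub ((val x).2, (val x).1) (arc_rev_subproof x).

Lemma arc_revK : involutive arc_rev.
Proof. by move=> x; apply: val_inj; case: x => [[]]. Qed.

Lemma arc_rev_neq x : arc_rev x != x.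
Proof.
apply/eqP => /(congr1 val); case: x => [[x1 x2] /= ex] [x21].
by move: ex; rewrite x21 eirr.
Qed.

Definition arc_rev_index (i : 'I_#|arcs e|) := enum_rank (arc_rev (enum_val i)).

Lemma arc_rev_indexK : involutive arc_rev_index.
Proof. by move=> i; rewrite /arc_rev_index enum_rankK arc_revK enum_valK. Qed.

Definition arc_rev_perm : 'S_#|arcs e| := perm (can_inj arc_rev_indexK).

Lemma arc_rev_eq x y :
  (arc_rev x == y) = ((val y).1 == (val x).2) && ((val y).2 == (val x).1).
Proof.
case: y => [[y1 y2] ?].
by rewrite -val_eqE /= xpair_eqE ![_ == y1]eq_sym ![_ == y2]eq_sym.
Qed.

Lemma arc_rev_permE i : arc_rev_perm i = enum_rank (arc_rev (enum_val i)).
Proof. by rewrite permE. Qed.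

Lemma arc_rev_permK : involutive arc_rev_perm.
Proof. by move=> i; rewrite !permE arc_rev_indexK. Qed.

Lemma arc_rev_perm_neq i : arc_rev_perm i != i.
Proof. by rewrite arc_rev_permE -(inj_eq enum_val_inj) enum_rankK arc_rev_neq. Qed.

Lemma arcS_perm_mx (R : nzRingType) : arcS R e = perm_mx arc_rev_perm.
Proof.
apply/matrixP => i j; rewrite !mxE arc_rev_permE.
by rewrite -(inj_eq enum_val_inj) enum_rankK arc_rev_eq.
Qed.

End ArcReversal.

Theorem theorem5 (R : numClosedFieldType) (V : finType) (e : rel V)
  (esym : symmetric e) (eirr : irreflexive e) (econn : connected_graph e)
  (a b : R) (d : 'M[R]_(#|V|, #|arcs e|)) (hd : d *m adjmx d = 1%:M)
  (u : R) (hu : b ^+ 2 * u ^+ 2 != 1) :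
  let c := a - b in
  let C := a *: (adjmx d *m d) + b *: (1%:M - adjmx d *m d) in
  let U := arcS R e *m C in
  \det (1%:M - u *: U) =
    (1 - b ^+ 2 * u ^+ 2) ^ ((nedges e)%:Z - (#|V|)%:Z)
    * \det ((1 - a * b * u ^+ 2) *: 1%:M - (c * u) *: (d *m arcS R e *m adjmx d)).
Proof.
move=> c C U; set k := 1 - b ^+ 2 * u ^+ 2.
have k_neq0 : k != 0 by rewrite subr_eq0 eq_sym.
have SS : arcS R e *m arcS R e = 1%:M.
  by rewrite (arcS_perm_mx esym) (perm_mx_invol (arc_rev_permK esym)).
have det_1B_S : \det (1%:M - (b * u) *: arcS R e) = k ^+ nedges e.
  have S_fpfree := arc_rev_perm_neq esym eirr.
  by rewrite (arcS_perm_mx esym) (det_1B_scale_perm_mx (arc_rev_permK esym)) // exprMn.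
have := det_coined_walk hd SS a k_neq0; rewrite det_1B_S.
move/(canRL (mulfK (expf_neq0 _ k_neq0))) ->.
by rewrite expfzDr // exprnN mulrAC.
Qed.
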